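(* Let $X$ be a Fréchet space and $(\|\cdot\|_k)_{k\ge 1}$ an associated increasing family of seminorms (i.e. $\|x\|_k\le\|x\|_{k+1}$ for all $x\in X$, $k\ge1$). Equip $X$ with the metric \[ d_X(x,y)=\sum_{k=1}^{\infty}2^{-k}\min\bigl(1,\|x-y\|_k\bigr). \] A linear operator $T:X\to X$ is an isometry for $d_X$ (i.e. $d_X(Tx,Ty)=d_X(x,y)$ for all $x,y\in X$) if and only if $\|Tx\|_k=\|x\|_k$ for all $x\in X$ and all $k\in\mathbb{N}$. *)

From HB Require Import structures.
From mathcomp Require Import all_boot all_order all_algebra.
From mathcomp Require Import all_classical all_reals all_analysis.
Set Implicit Arguments. Unset Strict Implicit. Unset Printing Implicit Defensive.
Import Order.TTheory GRing.Theory Num.Theory.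
Local Open Scope ring_scope.
Local Open Scope classical_set_scope.

Definition is_seminorm (R : realType) (V : lmodType R) (p : V -> R) : Prop :=
  (forall x y : V, p (x + y) <= p x + p y) /\
  (forall (a : R) (x : V), p (a *: x) = `|a| * p x).

(* The metric d_X(x,y) = sum_{k>=1} 2^-k min(1, ||x-y||_k), as the limit of
   partial sums (the index 0 of the family p is unused). *)
Definition frechet_dist (R : realType) (V : lmodType R) (p : nat -> V -> R)
  (x y : V) : R :=
  limn (fun n => \sum_(1 <= k < n) (2 ^- k * Num.min 1 (p k (x - y)))).

(* (X, (||.||_k)_{k>=1}) is a Frechet space with an increasing family of
   seminorms: each ||.||_k is a seminorm, the family is increasing and
   separating (so d_X is a metric inducing the locally convex topology),
   and X is complete for d_X. *)
Definition increasing_frechet_seminorms (R : realType) (V : lmodType R)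
  (p : nat -> V -> R) : Prop :=
  (forall k, (1 <= k)%N -> is_seminorm (p k)) /\
  (forall k x, (1 <= k)%N -> p k x <= p k.+1 x) /\
  (forall x, (forall k, (1 <= k)%N -> p k x = 0) -> x = 0) /\
  (forall u : nat -> V,
     (forall e : R, 0 < e -> exists N, forall m n, (N <= m)%N -> (N <= n)%N ->
        frechet_dist p (u m) (u n) < e) ->
     exists l : V, frechet_dist p (u n) l @[n --> \oo] --> 0).

(* For x fixed, t |-> d(t x, 0) determines the nondecreasing sequence
   (||x||_k)_k.  Indeed s d(x / s, 0) = sum_k 2^-k min(s, ||x||_k), and if two
   nondecreasing sequences a, b gave the same function of s while a_k < b_k,
   then for a_k < s1 < s2 = b_k the second difference
     sum_i 2^-i ((min(s2, b_i) - min(s1, b_i)) - (min(s2, a_i) - min(s1, a_i)))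
   would vanish, although its k-th term is positive and all its terms are
   nonnegative: the a-increment is 0 for i <= k and the b-increment is the
   maximal s2 - s1 for i >= k.  A linear isometry T preserves
   d(t x, 0) = d(T (t x), T 0), hence every ||.||_k; the converse is
   immediate since T x - T y = T (x - y). *)

From HB Require Import structures.
From mathcomp Require Import all_boot all_order all_algebra.
From mathcomp Require Import all_classical all_reals all_analysis.
From mathcomp Require Import ring lra.
Import Order.TTheory GRing.Theory Num.Theory numFieldNormedType.Exports.
Local Open Scope ring_scope.
Local Open Scope classical_set_scope.

Definition capped_sum {R : numFieldType} (c : nat -> R) (t : R) : R ^nat :=
  fun n => \sum_(1 <= k < n) 2 ^- k * Num.min 1 (t * c k).

Definition min_sum {R : numFieldType} (c : nat -> R) (s : R) : R ^nat :=
  fun n => \sum_(1 <= k < n) 2 ^- k * Num.min s (c k).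

Section CappedSums.
Variable R : realType.

Lemma sum_exp2V_le1 n : \sum_(1 <= k < n) (2 : R) ^- k <= 1.
Proof.
suff sumE m : \sum_(1 <= k < m.+1) (2 : R) ^- k = 1 - 2 ^- m.
  by case: n => [|n]; [rewrite big_geq | rewrite sumE gerBl invr_ge0 exprn_ge0].
elim: m => [|m IHm]; first by rewrite big_geq // expr0 invr1 subrr.
by rewrite big_nat_recr //= IHm exprS invfM; field.
Qed.

Lemma sum_nat_ge_term (F : nat -> R) m n j : (m <= j < n)%N ->
  (forall i, (m <= i < n)%N -> 0 <= F i) -> F j <= \sum_(m <= i < n) F i.
Proof.
move=> jmn F_ge0; rewrite (bigD1_seq j) ?mem_index_iota ?iota_uniq //= lerDl.
by rewrite big_seq_cond sumr_ge0 // => i /andP[]; rewrite mem_index_iota => /F_ge0.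
Qed.

Lemma capped_sum_cvg (c : nat -> R) t : 0 <= t ->
  (forall k, (0 < k)%N -> 0 <= c k) -> cvgn (capped_sum c t).
Proof.
move=> t_ge0 c_ge0.
have term_ge0 k : (0 < k)%N -> 0 <= 2 ^- k * Num.min 1 (t * c k).
  by move=> k_gt0; rewrite mulr_ge0 ?invr_ge0 ?exprn_ge0 // le_min ler01 mulr_ge0 ?c_ge0.
apply: nondecreasing_is_cvgn.
  apply/nondecreasing_seqP => -[|n]; rewrite /capped_sum; first by rewrite !big_geq.
  by rewrite [leRHS]big_nat_recr //= lerDl term_ge0.
exists 1 => _ [n _ <-]; apply: le_trans (sum_exp2V_le1 n); apply: ler_sum_nat => k _.
by rewrite ler_piMr ?invr_ge0 ?exprn_ge0 // ge_min lexx.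
Qed.

Lemma min_sumE (c : nat -> R) s n : 0 < s -> min_sum c s n = s * capped_sum c s^-1 n.
Proof.
move=> s_gt0; rewrite mulr_sumr; apply: eq_bigr => k _.
by rewrite mulrCA; congr (_ * _); rewrite minr_pMr ?ltW // mulr1 mulVKf ?lt0r_neq0.
Qed.

Lemma min_sum_cvg {c : nat -> R} {s : R} : 0 < s -> (forall k, (0 < k)%N -> 0 <= c k) ->
  min_sum c s n @[n --> \oo] --> s * limn (capped_sum c s^-1).
Proof.
move=> s_gt0 c_ge0; under eq_fun do rewrite min_sumE //.
by apply: cvgM; [exact: cvg_cst | apply: capped_sum_cvg; rewrite // invr_ge0 ltW].
Qed.

Lemma min_increment_le (s1 s2 x y : R) : s1 <= s2 -> x <= s1 \/ s2 <= y ->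
  Num.min s2 x - Num.min s1 x <= Num.min s2 y - Num.min s1 y.
Proof.
move=> ? xy; rewrite !minElt.
by case: (ltP s2 x); case: (ltP s1 x); case: (ltP s2 y); case: (ltP s1 y); case: xy; lra.
Qed.

Section CappedSumLimits.
Variables (a b : nat -> R).
Hypotheses (a_ge0 : forall k, (0 < k)%N -> 0 <= a k)
  (b_ge0 : forall k, (0 < k)%N -> 0 <= b k).
Hypotheses (a_mono : forall i j, (0 < i)%N -> (i <= j)%N -> a i <= a j)
  (b_mono : forall i j, (0 < i)%N -> (i <= j)%N -> b i <= b j).
Hypothesis eq_capped_lim :
  forall t, 0 < t -> limn (capped_sum a t) = limn (capped_sum b t).

Lemma capped_sum_lim_le k : (0 < k)%N -> b k <= a k.
Proof.
move=> k_gt0; rewrite leNgt; apply/negP => ab_lt.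
have ak_ge0 := a_ge0 _ k_gt0.
pose s1 := (a k + b k) / 2; pose s2 := b k.
have s1_gt0 : 0 < s1 by rewrite /s1; lra.
have s2_gt0 : 0 < s2 by rewrite /s2; lra.
have s12 : s1 < s2 by rewrite /s1 /s2; lra.
pose incr x := Num.min s2 x - Num.min s1 x.
pose e i := 2 ^- i * (incr (b i) - incr (a i)).
have e_ge0 i : (0 < i)%N -> 0 <= e i.
  move=> i_gt0; rewrite mulr_ge0 ?invr_ge0 ?exprn_ge0 // subr_ge0.
  apply: min_increment_le (ltW s12) _; case: (leqP i k) => [ik | ki].
    by left; apply: le_trans (a_mono _ _ i_gt0 ik) _; rewrite /s1; lra.
  by right; apply: b_mono (ltnW ki).
have ek : e k = 2 ^- k * (s2 - s1).
  by rewrite /e /incr minxx (min_l (ltW s12)) !min_r ?subrr ?subr0 // /s1 /s2; lra.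
have e_cvg : \sum_(1 <= i < n) e i @[n --> \oo] --> 0.
  have -> : (fun n => \sum_(1 <= i < n) e i) = (fun n =>
      min_sum b s2 n - min_sum b s1 n - (min_sum a s2 n - min_sum a s1 n)).
    by apply/funext => n; rewrite /min_sum -!sumrB; apply: eq_bigr => i _; rewrite /e /incr; ring.
  rewrite -(subrr (s2 * limn (capped_sum b s2^-1) - s1 * limn (capped_sum b s1^-1))).
  apply: cvgB; first exact: cvgB (min_sum_cvg s2_gt0 b_ge0) (min_sum_cvg s1_gt0 b_ge0).
  rewrite -!eq_capped_lim ?invr_gt0 //.
  exact: cvgB (min_sum_cvg s2_gt0 a_ge0) (min_sum_cvg s1_gt0 a_ge0).
have : e k <= 0.
  apply: (cvgr_to_ge e_cvg); exists k.+1 => // n /= kn.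
  by apply: sum_nat_ge_term => [|i /andP[/e_ge0]]; rewrite ?k_gt0.
by rewrite ek pmulr_rle0 ?invr_gt0 ?exprn_gt0 // subr_le0 leNgt s12.
Qed.

End CappedSumLimits.

Lemma capped_sum_lim_inj (a b : nat -> R) :
  (forall k, (0 < k)%N -> 0 <= a k) -> (forall k, (0 < k)%N -> 0 <= b k) ->
  (forall i j, (0 < i)%N -> (i <= j)%N -> a i <= a j) ->
  (forall i j, (0 < i)%N -> (i <= j)%N -> b i <= b j) ->
  (forall t, 0 < t -> limn (capped_sum a t) = limn (capped_sum b t)) ->
  forall k, (0 < k)%N -> a k = b k.
Proof.
move=> a_ge0 b_ge0 a_mono b_mono eq_lim k k_gt0; apply/eqP; rewrite eq_le.
rewrite (capped_sum_lim_le _ _ b_ge0 a_ge0 b_mono a_mono _ _ k_gt0) => [|t /eq_lim //].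
exact: capped_sum_lim_le eq_lim _ k_gt0.
Qed.

End CappedSums.

Section Seminorms.
Variables (R : realType) (V : lmodType R).

Lemma seminorm0 (q : V -> R) : is_seminorm q -> q 0 = 0.
Proof. by case=> _ qZ; rewrite -(scale0r (0 : V)) qZ normr0 mul0r. Qed.

Lemma seminorm_ge0 (q : V -> R) x : is_seminorm q -> 0 <= q x.
Proof.
move=> q_semi; have [qD qZ] := q_semi; have := qD x (- x).
by rewrite subrr seminorm0 // -scaleN1r qZ normrN normr1 mul1r; lra.
Qed.

Lemma frechet_dist_additive (p : nat -> V -> R) (T : {additive V -> V}) :
  (forall k x, (0 < k)%N -> p k (T x) = p k x) ->
  forall x y, frechet_dist p (T x) (T y) = frechet_dist p x y.
Proof.
move=> pT x y; rewrite /frechet_dist -raddfB; congr (limn _); apply/funext => n.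
by apply: eq_big_nat => k /andP[k_gt0 _]; rewrite pT.
Qed.

Variable p : nat -> V -> R.
Hypothesis p_seminorm : forall k, (0 < k)%N -> is_seminorm (p k).
Hypothesis p_incr : forall k x, (0 < k)%N -> p k x <= p k.+1 x.

Lemma seminorm_family_mono x i j : (0 < i)%N -> (i <= j)%N -> p i x <= p j x.
Proof.
move=> i_gt0; elim: j => [|j IHj]; first by rewrite leqn0 => /eqP i0; rewrite i0 in i_gt0.
rewrite leq_eqVlt => /orP[/eqP -> // | ij]; apply: le_trans (IHj ij) _.
exact/p_incr/(leq_trans i_gt0 ij).
Qed.

Lemma frechet_dist_scale0 x t : 0 < t ->
  frechet_dist p (t *: x) 0 = limn (capped_sum (p^~ x) t).
Proof.
move=> t_gt0; rewrite /frechet_dist /capped_sum; congr (limn _); apply/funext => n.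
apply: eq_big_nat => k /andP[k_gt0 _]; have [_ pZ] := p_seminorm _ k_gt0.
by rewrite subr0 pZ gtr0_norm.
Qed.

End Seminorms.

Theorem lemma1p1 (R : realType) (V : lmodType R) (p : nat -> V -> R)
  (hX : increasing_frechet_seminorms p) (T : {linear V -> V}) :
  (forall x y : V, frechet_dist p (T x) (T y) = frechet_dist p x y) <->
  (forall (k : nat) (x : V), (1 <= k)%N -> p k (T x) = p k x).
Proof.
have [p_seminorm [p_incr _]] := hX.
split=> [T_iso k x k_gt0 | ]; last exact: frechet_dist_additive.
apply: (capped_sum_lim_inj _ (p^~ (T x)) (p^~ x)) => //.
1-2: by move=> i i_gt0; apply/seminorm_ge0/p_seminorm.
1-2: by move=> i j; apply: seminorm_family_mono.
by move=> t t_gt0; rewrite -!frechet_dist_scale0 // -(T_iso (t *: x) 0) linearZZ raddf0.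
Qed.
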